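(* Let $\mathcal G$ be a continuous game with players $k\in\{1,\dots,K\}$, action sets $\mathcal Z_k=\mathbb R^{n_k}$ and twice continuously differentiable cost functions $f_k:\mathbb R^n\to\mathbb R$ ($n=n_1+\dots+n_K$), and let $F=F_{\mathcal G}:\mathbb R^n\to\mathbb R^n$ be its gradient operator. Suppose $\mathcal G$ is monotone and that there are $\ell,\Lambda>0$ with $\|F(z)-F(z')\|\le \ell\|z-z'\|$ and $\|\partial F(z)-\partial F(z')\|_\sigma\le\Lambda\|z-z'\|$ for all $z,z'\in\mathbb R^n$. Let $z^{(-1)},z^{(0)}\in\mathbb R^n$ and suppose there is $z^*\in\mathbb R^n$ with $F(z^* )=0$, $\|z^*-z^{(-1)}\|\le D$ and $\|z^*-z^{(0)}\|\le D$. Let $\eta\le\min\{\frac{1}{150\ell},\frac{1}{1711D\Lambda}\}$ and let $z^{(t)}$ be the iterates of the optimistic gradient algorithm $z^{(t+1)}=z^{(t)}-2\eta F(z^{(t)})+\eta F(z^{(t-1)})$, $t\ge0$. Then for every integer $T\ge1$, $$\|F(z^{(T)})\|\le\frac{60D}{\eta\sqrt T}.$$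
   Context: For the game, $z=(z_1,\dots,z_K)$ with $z_k\in\mathbb R^{n_k}$, $z_{-k}$ denotes the actions of all players other than $k$, and $F_{\mathcal G}(z):=(\nabla_{z_1}f_1(z),\dots,\nabla_{z_K}f_K(z))\in\mathbb R^n$. The game is monotone if $\langle F_{\mathcal G}(z')-F_{\mathcal G}(z),z'-z\rangle\ge0$ for all $z,z'$. $\partial F$ denotes the Jacobian of $F$, $\|\cdot\|$ the Euclidean norm and $\|\cdot\|_\sigma$ the spectral norm. *)

From HB Require Import structures.
From mathcomp Require Import all_boot all_order all_algebra.
From mathcomp Require Import all_classical all_reals all_analysis.
Set Implicit Arguments. Unset Strict Implicit. Unset Printing Implicit Defensive.
Import Order.TTheory GRing.Theory Num.Theory.
Import numFieldNormedType.Exports.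
Local Open Scope classical_set_scope.
Local Open Scope ring_scope.

Section Defs.
Variable R : realType.

Definition ebasis (n : nat) (i : 'I_n) : 'cV[R]_n := delta_mx i ord0.

Definition enorm (n : nat) (v : 'cV[R]_n) : R := Num.sqrt (\sum_i (v i ord0) ^+ 2).
Definition dotp (n : nat) (u v : 'cV[R]_n) : R := \sum_i u i ord0 * v i ord0.

Definition specnorm (n : nat) (A : 'M[R]_n) : R :=
  sup [set enorm (A *m v) | v in [set v : 'cV[R]_n | enorm v <= 1]].

Definition pderiv (n : nat) (i : 'I_n) (g : 'cV[R]_n -> R) (x : 'cV[R]_n) : R :=
  derive g x (ebasis i).

Definition C2 (n : nat) (g : 'cV[R]_n -> R) : Prop :=
  (forall i x, derivable g x (ebasis i)) /\
  (forall i, continuous (pderiv i g)) /\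
  (forall i j x, derivable (pderiv i g) x (ebasis j)) /\
  (forall i j, continuous (pderiv j (pderiv i g))).

(* Game gradient operator: the players are 'I_K, coordinate i of the joint
   action z in R^n is controlled by player (owner i), so that player k's
   action z_k consists of the coordinates owned by k, and
   F(z)_i = d f_(owner i) / d z_i (z), i.e. F = (grad_{z_k} f_k)_k
   up to a fixed reordering of coordinates. *)
Definition gameF (n K : nat) (owner : 'I_n -> 'I_K) (f : 'I_K -> 'cV[R]_n -> R)
  (z : 'cV[R]_n) : 'cV[R]_n :=
  \col_i pderiv i (f (owner i)) z.

Definition jac (n : nat) (F : 'cV[R]_n -> 'cV[R]_n) (z : 'cV[R]_n) : 'M[R]_n :=
  \matrix_(i, j) pderiv j (fun y => F y i ord0) z.

(* Optimistic gradient iterates: og_pair F eta zm1 z0 t = (z^(t-1), z^(t)) *)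
Fixpoint og_pair (n : nat) (F : 'cV[R]_n -> 'cV[R]_n) (eta : R)
  (zm1 z0 : 'cV[R]_n) (t : nat) : 'cV[R]_n * 'cV[R]_n :=
  match t with
  | 0 => (zm1, z0)
  | t'.+1 => let p := og_pair F eta zm1 z0 t' in
             (p.2, p.2 - (2 * eta) *: F p.2 + eta *: F p.1)
  end.

Definition og_iter (n : nat) (F : 'cV[R]_n -> 'cV[R]_n) (eta : R)
  (zm1 z0 : 'cV[R]_n) (t : nat) : 'cV[R]_n := (og_pair F eta zm1 z0 t).2.

End Defs.

(* Write [w_t := z^(t) + eta F(z^(t-1))].  Monotonicity of F makes the
   potential [|F w_t|^2 + |F w_t - F z^(t-1)|^2] nonincreasing in t, while the
   classical distance argument (|w_t - z*|^2 decreases up to Lipschitz errors)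
   bounds [eta^2 sum_t |F z^(t)|^2] by [3 D^2].  The potential at time T is
   thus at most the average of the first T potentials, each of which is
   controlled by two consecutive |F z^(t)|^2; this gives
   [T eta^2 |F z^(T)|^2 <= 81 D^2]. *)
From HB Require Import structures.
From mathcomp Require Import all_boot all_order all_algebra.
From mathcomp Require Import all_classical all_reals all_analysis.
From mathcomp Require Import ring lra.
Import Order.TTheory GRing.Theory Num.Theory.
Local Open Scope ring_scope.

Section InnerProduct.
Context {R : realType} {n : nat}.
Implicit Types (u v w : 'cV[R]_n).

Lemma dotpC u v : dotp u v = dotp v u.
Proof. by apply: eq_bigr => i _; rewrite mulrC. Qed.

Lemma dotpDl u v w : dotp (u + v) w = dotp u w + dotp v w.
Proof. by rewrite /dotp -big_split; apply: eq_bigr => i _; rewrite mxE mulrDl. Qed.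

Lemma dotpNl u v : dotp (- u) v = - dotp u v.
Proof. by rewrite /dotp -sumrN; apply: eq_bigr => i _; rewrite mxE mulNr. Qed.

Lemma dotpZl a u v : dotp (a *: u) v = a * dotp u v.
Proof. by rewrite /dotp mulr_sumr; apply: eq_bigr => i _; rewrite mxE mulrA. Qed.

Lemma dotpDr u v w : dotp u (v + w) = dotp u v + dotp u w.
Proof. by rewrite dotpC dotpDl !(dotpC u). Qed.

Lemma dotpNr u v : dotp u (- v) = - dotp u v.
Proof. by rewrite dotpC dotpNl dotpC. Qed.

Lemma dotpZr a u v : dotp u (a *: v) = a * dotp u v.
Proof. by rewrite dotpC dotpZl dotpC. Qed.

Definition dotp_linE := (dotpDl, dotpDr, dotpNl, dotpNr, dotpZl, dotpZr).

Definition sqnorm v := dotp v v.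

Lemma sqnorm_ge0 v : 0 <= sqnorm v.
Proof. by apply: sumr_ge0 => i _; rewrite -expr2 sqr_ge0. Qed.

Lemma enormE v : enorm v = Num.sqrt (sqnorm v).
Proof. by congr Num.sqrt; apply: eq_bigr => i _; rewrite expr2. Qed.

Lemma enorm_ge0 v : 0 <= enorm v.
Proof. by rewrite enormE sqrtr_ge0. Qed.

Lemma sqr_enorm v : enorm v ^+ 2 = sqnorm v.
Proof. by rewrite enormE sqr_sqrtr // sqnorm_ge0. Qed.

Lemma sqnorm_le_sqr [v a] : enorm v <= a -> sqnorm v <= a ^+ 2.
Proof.
move=> le_va; rewrite -sqr_enorm lerXn2r ?nnegrE ?enorm_ge0 //.
exact: le_trans (enorm_ge0 v) le_va.
Qed.

Lemma sqnormZ a v : sqnorm (a *: v) = a ^+ 2 * sqnorm v.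
Proof. by rewrite /sqnorm !dotp_linE mulrA expr2. Qed.

Lemma sqnormN v : sqnorm (- v) = sqnorm v.
Proof. by rewrite /sqnorm !dotp_linE opprK. Qed.

Lemma sqnormBC u v : sqnorm (u - v) = sqnorm (v - u).
Proof. by rewrite -sqnormN opprB. Qed.

Lemma sqnormD_le u v : sqnorm (u + v) <= 2 * sqnorm u + 2 * sqnorm v.
Proof.
have := sqnorm_ge0 (u - v); rewrite /sqnorm !dotp_linE (dotpC v u); lra.
Qed.

Lemma sqnormB_le u v : sqnorm (u - v) <= 2 * sqnorm u + 2 * sqnorm v.
Proof. by rewrite -(sqnormN v); apply: sqnormD_le. Qed.

(* With [p, q] the operator at consecutive extrapolated points and [r, s] at
   consecutive iterates, this is one step of the potential decrease; it rests
   on [|q|^2 - |p|^2 + |r - p|^2 - |q - r|^2 = 2 <q - p, r>]. *)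
Lemma potential_step_le [p q r s : 'cV[R]_n] c :
  dotp (q - p) r <= 0 -> sqnorm (q - r) <= c * sqnorm (r - s) ->
  0 <= c -> 4 * c <= 1 ->
  sqnorm q + sqnorm (q - r) <= sqnorm p + sqnorm (p - s).
Proof.
move=> qpr_le0 le_qr c_ge0 c_le.
have key : sqnorm q - sqnorm p + sqnorm (r - p) - sqnorm (q - r)
           = 2 * dotp (q - p) r.
  rewrite /sqnorm !dotp_linE (dotpC r q) (dotpC r p); lra.
have le_rs : c * sqnorm (r - s) <= c * (2 * sqnorm (r - p) + 2 * sqnorm (p - s)).
  by apply: ler_wpM2l => //; rewrite -[r - s](subrKA p); apply: sqnormD_le.
have := sqnorm_ge0 (p - s).
have : 0 <= (1 - 4 * c) * sqnorm (r - p) by rewrite mulr_ge0 ?sqnorm_ge0 ?subr_ge0.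
have : 0 <= (1 - 4 * c) * sqnorm (p - s) by rewrite mulr_ge0 ?sqnorm_ge0 ?subr_ge0.
lra.
Qed.

Lemma sqnorm_monotone_step_le (b r s : 'cV[R]_n) (eta : R) :
  0 <= eta -> 0 <= dotp r b ->
  sqnorm (b + eta *: s - eta *: r)
    <= sqnorm (b + eta *: s) + eta ^+ 2 * (sqnorm (r - s) - sqnorm s).
Proof.
move=> eta_ge0 rb_ge0; have : 0 <= eta * dotp r b by apply: mulr_ge0.
rewrite /sqnorm !dotp_linE (dotpC s r) (dotpC b r) (dotpC b s) expr2; lra.
Qed.

End InnerProduct.

Section OptimisticGradient.
Context {R : realType} {n : nat} {F : 'cV[R]_n -> 'cV[R]_n}.
Context {ell eta D : R} {zm1 z0 zstar : 'cV[R]_n}.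

Hypothesis monoF : forall a b, 0 <= dotp (F b - F a) (b - a).
Hypothesis lipF : forall a b, enorm (F a - F b) <= ell * enorm (a - b).
Hypothesis ell_ge0 : 0 <= ell.
Hypothesis eta_gt0 : 0 < eta.
Hypothesis small_step : eta * ell <= 1 / 10.
Hypothesis F_zstar : F zstar = 0.
Hypothesis zm1_near : enorm (zstar - zm1) <= D.
Hypothesis z0_near : enorm (zstar - z0) <= D.

(* [u k] is the paper's z^(k-1), so that [og_iter F eta zm1 z0 t = u t.+1]. *)
Local Notation u k := (og_pair F eta zm1 z0 k).1.
Local Notation w k := (u k.+1 + eta *: F (u k)).
Local Notation psi k := (sqnorm (F (w k)) + sqnorm (F (w k) - F (u k))).
Local Notation c := ((eta * ell) ^+ 2).
Local Notation gsum N := (\sum_(k < N) sqnorm (F (u k))).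

Let c_ge0 : 0 <= c. Proof. exact: sqr_ge0. Qed.

Let c_small : c <= 1 / 100.
Proof.
have : 0 <= eta * ell by rewrite mulr_ge0 // ltW.
move: small_step; move: (eta * ell) => x; rewrite expr2; nra.
Qed.

Let eta2_ge0 : 0 <= eta ^+ 2. Proof. exact: sqr_ge0. Qed.

Lemma og_step k : u k.+2 = u k.+1 - (2 * eta) *: F (u k.+1) + eta *: F (u k).
Proof. by []. Qed.

Lemma lipF_sqnorm a b : sqnorm (F a - F b) <= ell ^+ 2 * sqnorm (a - b).
Proof. by have := sqnorm_le_sqr (lipF a b); rewrite exprMn sqr_enorm. Qed.

Lemma lipF_step [a b v] : a - b = eta *: v -> sqnorm (F a - F b) <= c * sqnorm v.
Proof.
move=> ab_eq; apply: le_trans (lipF_sqnorm a b) _.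
by rewrite ab_eq sqnormZ exprMn mulrCA mulrA.
Qed.

Lemma w_succB k : w k.+1 - w k = - (eta *: F (u k.+1)).
Proof. by rewrite og_step; apply/matrixP => i j; rewrite !mxE; ring. Qed.

Lemma w_succB_u k : w k.+1 - u k.+1 = eta *: (F (u k) - F (u k.+1)).
Proof. by rewrite og_step; apply/matrixP => i j; rewrite !mxE; ring. Qed.

Lemma wB_u k : w k - u k.+1 = eta *: F (u k).
Proof. by rewrite addrAC subrr add0r. Qed.

Lemma u_succB k : u k.+2 - u k.+1 = eta *: (F (u k) - 2%:R *: F (u k.+1)).
Proof. by rewrite og_step; apply/matrixP => i j; rewrite !mxE; ring. Qed.

Lemma potential_succ_le k : psi k.+1 <= psi k.
Proof.
apply: (potential_step_le c) => //; last by have := c_small; lra.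
- have := monoF (w k) (w k.+1).
  by rewrite w_succB dotpNr dotpZr oppr_ge0 pmulr_rle0.
- by rewrite sqnormBC; apply: lipF_step; rewrite -opprB w_succB_u -scalerN opprB.
Qed.

Lemma potential_le k m : (k <= m)%N -> psi m <= psi k.
Proof.
by move: k m; apply/(nonincreasing_seqP (fun k => psi k)); apply: potential_succ_le.
Qed.

Local Notation dist k := (sqnorm (w k - zstar)).

Lemma dist_succ_le k :
  dist k.+1 <= dist k + eta ^+ 2 * (sqnorm (F (u k.+1) - F (u k)) - sqnorm (F (u k))).
Proof.
have -> : w k.+1 - zstar = u k.+1 - zstar + eta *: F (u k) - eta *: F (u k.+1).
  by rewrite og_step; apply/matrixP => i j; rewrite !mxE; ring.
rewrite [w k - zstar]addrAC; apply: sqnorm_monotone_step_le; first exact: ltW.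
by have := monoF zstar (u k.+1); rewrite F_zstar subr0.
Qed.

Lemma F_succB_le k :
  sqnorm (F (u k.+2) - F (u k.+1))
    <= c * (2 * sqnorm (F (u k)) + 8 * sqnorm (F (u k.+1))).
Proof.
apply: le_trans (lipF_step (u_succB k)) (ler_wpM2l c_ge0 _).
by apply: le_trans (sqnormB_le _ _) _; rewrite sqnormZ; lra.
Qed.

Lemma dist_telescope N :
  dist N.+1 + eta ^+ 2 * ((1 - 10 * c) * gsum N.+1 + 2 * c * sqnorm (F (u N)))
    <= dist 0 + eta ^+ 2 * sqnorm (F (u 1) - F (u 0)).
Proof.
elim: N => [|N IH].
  have := mulr_ge0 eta2_ge0 (mulr_ge0 c_ge0 (sqnorm_ge0 (F (u 0)))).
  by have := dist_succ_le 0; rewrite big_ord_recr big_ord0 /=; lra.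
have := ler_wpM2l eta2_ge0 (F_succB_le N).
by have := dist_succ_le N.+1; move: IH; rewrite (big_ord_recr N.+1) /=; lra.
Qed.

Lemma dist_init_le :
  dist 0 + eta ^+ 2 * sqnorm (F (u 1) - F (u 0)) <= (2 + 6 * c) * D ^+ 2.
Proof.
have eta_lipF a b : eta ^+ 2 * sqnorm (F a - F b) <= c * sqnorm (a - b).
  by apply: le_trans (ler_wpM2l eta2_ge0 (lipF_sqnorm a b)) _; rewrite exprMn mulrA.
have z0_sq : sqnorm (z0 - zstar) <= D ^+ 2 by rewrite sqnormBC sqnorm_le_sqr.
have zm1_sq : sqnorm (zm1 - zstar) <= D ^+ 2 by rewrite sqnormBC sqnorm_le_sqr.
have dist0_le :
    dist 0 <= 2 * sqnorm (z0 - zstar) + 2 * (eta ^+ 2 * sqnorm (F zm1 - F zstar)).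
  have -> : w 0 - zstar = z0 - zstar + eta *: (F zm1 - F zstar).
    by rewrite F_zstar subr0 addrAC.
  by rewrite -sqnormZ; apply: sqnormD_le.
have z0_zm1 :
    sqnorm (z0 - zm1) <= 2 * sqnorm (z0 - zstar) + 2 * sqnorm (zm1 - zstar).
  by rewrite (sqnormBC zm1 zstar) -[z0 - zm1](subrKA zstar) sqnormD_le.
have := ler_wpM2l c_ge0 z0_zm1; have := ler_wpM2l c_ge0 z0_sq.
have := ler_wpM2l c_ge0 zm1_sq; have := eta_lipF zm1 zstar; have := eta_lipF z0 zm1.
rewrite /=; lra.
Qed.

Lemma gsum_le N : eta ^+ 2 * gsum N.+1 <= 3 * D ^+ 2.
Proof.
have gsum_ge0 : 0 <= eta ^+ 2 * gsum N.+1.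
  by rewrite mulr_ge0 ?sumr_ge0 // => k; rewrite sqnorm_ge0.
have := mulr_ge0 eta2_ge0 (mulr_ge0 c_ge0 (sqnorm_ge0 (F (u N)))).
have : 0 <= (1 / 100 - c) * (eta ^+ 2 * gsum N.+1) by rewrite mulr_ge0 ?subr_ge0.
have : 0 <= (1 / 100 - c) * D ^+ 2 by rewrite mulr_ge0 ?subr_ge0 ?sqr_ge0.
have := sqnorm_ge0 (w N.+1 - zstar); have := dist_telescope N; have := dist_init_le.
lra.
Qed.

Lemma potential_le_F k : psi k <= 6 * sqnorm (F (u k.+1)) + 3 * sqnorm (F (u k)).
Proof.
have near := lipF_step (wB_u k).
have := sqnormD_le (F (u k.+1)) (F (w k) - F (u k.+1)); rewrite addrC subrK.
have := sqnormB_le (F (w k)) (F (u k)).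
have : 0 <= (1 - 6 * c) * sqnorm (F (u k)).
  by apply: mulr_ge0 (sqnorm_ge0 _); rewrite subr_ge0; have := c_small; lra.
lra.
Qed.

Lemma F_le_potential k : sqnorm (F (u k.+1)) <= 3 * psi k.
Proof.
have near := lipF_step (wB_u k).
have := sqnormB_le (F (w k)) (F (w k) - F (u k.+1)); rewrite opprB addrC subrK.
have F_le := sqnormB_le (F (w k)) (F (w k) - F (u k)); rewrite opprB addrC subrK in F_le.
have := ler_wpM2l c_ge0 F_le.
have : 0 <= (1 - 4 * c) * sqnorm (F (w k)).
  by apply: mulr_ge0 (sqnorm_ge0 _); rewrite subr_ge0; have := c_small; lra.
have : 0 <= (3 - 4 * c) * sqnorm (F (w k) - F (u k)).
  by apply: mulr_ge0 (sqnorm_ge0 _); rewrite subr_ge0; have := c_small; lra.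
lra.
Qed.

Lemma potential_sum_le N : \sum_(k < N) psi k <= 6 * gsum N.+1 + 3 * gsum N.
Proof.
elim: N => [|N IH].
  by rewrite !big_ord0 big_ord1 mulr0 addr0 mulr_ge0 ?sqnorm_ge0.
rewrite big_ord_recr (big_ord_recr N.+1) (big_ord_recr N) /=; move: IH.
by rewrite big_ord_recr /=; have := potential_le_F N; lra.
Qed.

Lemma og_last_iterate_sqnorm T :
  T%:R * eta ^+ 2 * sqnorm (F (og_iter F eta zm1 z0 T)) <= 81 * D ^+ 2.
Proof.
have avg_le : T%:R * psi T <= \sum_(k < T) psi k.
  have -> : T%:R * psi T = \sum_(k < T) psi T.
    by rewrite sumr_const card_ord mulr_natl.
  by apply: ler_sum => k _; apply: potential_le; apply: ltnW.
have := ler_wpM2l eta2_ge0 avg_le; have := ler_wpM2l eta2_ge0 (potential_sum_le T).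
have := ler_wpM2l (mulr_ge0 (ler0n R T) eta2_ge0) (F_le_potential T).
have := mulr_ge0 eta2_ge0 (sumr_ge0 _ (fun k _ => sqnorm_ge0 (F (u k)))).
have := mulr_ge0 eta2_ge0 (sqnorm_ge0 (F (u T))).
by have := gsum_le T; rewrite /og_iter !big_ord_recr /=; lra.
Qed.

Lemma og_last_iterate T : (0 < T)%N ->
  enorm (F (og_iter F eta zm1 z0 T)) <= 9 * D / (eta * Num.sqrt T%:R).
Proof.
move=> T_gt0; have sqrtT_gt0 : 0 < Num.sqrt (T%:R : R) by rewrite sqrtr_gt0 ltr0n.
have D_ge0 : 0 <= D := le_trans (enorm_ge0 _) z0_near.
rewrite ler_pdivlMr ?mulr_gt0 // -(ler_pXn2r (isT : (0 < 2)%N)) ?nnegrE; last 2 first.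
- by rewrite !mulr_ge0 ?enorm_ge0 ?ltW.
- by rewrite mulr_ge0.
rewrite !exprMn sqr_enorm sqr_sqrtr ?ler0n //.
by have := og_last_iterate_sqnorm T; lra.
Qed.

End OptimisticGradient.

Theorem theorem5 (R : realType) (n K : nat) (owner : 'I_n -> 'I_K)
  (f : 'I_K -> 'cV[R]_n -> R)
  (hC2 : forall k, C2 (f k))
  (hmono : forall z z' : 'cV[R]_n,
     0 <= dotp (gameF owner f z' - gameF owner f z) (z' - z))
  (ell Lam : R) (hell : 0 < ell) (hLam : 0 < Lam)
  (hLipF : forall z z' : 'cV[R]_n,
     enorm (gameF owner f z - gameF owner f z') <= ell * enorm (z - z'))
  (hLipJ : forall z z' : 'cV[R]_n,
     specnorm (jac (gameF owner f) z - jac (gameF owner f) z')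
       <= Lam * enorm (z - z'))
  (zm1 z0 zstar : 'cV[R]_n) (D : R)
  (hstar : gameF owner f zstar = 0)
  (hDm1 : enorm (zstar - zm1) <= D) (hD0 : enorm (zstar - z0) <= D)
  (eta : R) (heta : 0 < eta)
  (heta1 : eta * (150 * ell) <= 1) (heta2 : eta * (1711 * D * Lam) <= 1)
  (T : nat) (hT : (1 <= T)%N) :
  enorm (gameF owner f (og_iter (gameF owner f) eta zm1 z0 T))
    <= 60 * D / (eta * Num.sqrt (T%:R)).
Proof.
have small_step : eta * ell <= 1 / 10 by lra.
have last_iterate :=
  og_last_iterate hmono hLipF (ltW hell) heta small_step hstar hDm1 hD0 T hT.
apply: le_trans last_iterate _.
have D_ge0 : 0 <= D := le_trans (enorm_ge0 _) hD0.
apply: ler_wpM2r; last by lra.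
by rewrite invr_ge0 mulr_ge0 ?sqrtr_ge0 ?ltW.
Qed.
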